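(* Given two curves $\sigma=(v_1,\dots,v_{m'})$ and $\tau=(w_1,\dots,w_{m''})$ in $\mathbb{R}^d$ and a parameter $k\in\mathbb{N}$, the following algorithm returns exactly $d_{k\text{-}DTW}(\sigma,\tau)$ and runs in $O(m'm''z)$ time, where $z$ is the number of distinct distances $\|v_i-w_j\|$ between pairs of vertices of $\sigma$ and $\tau$. Algorithm: set $D[i,j]=\|v_i-w_j\|$ for all $(i,j)\in[m']\times[m'']$; let $E[1]>\dots>E[z]>E[z+1]=0$ be the $z$ distinct entries of $D$ together with $0$, in decreasing order; set mincost $=\infty$; for each $l\in\{1,\dots,z+1\}$, let $D'[i,j]=\max\{D[i,j]-E[l],0\}$ for all $(i,j)$ and update mincost $\leftarrow\min\{\text{mincost},\ \mathrm{DTW}(D')+k\cdot E[l]\}$; return mincost.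
   Context: A traversal of $\sigma$ and $\tau$ is a sequence of index pairs starting with $(1,1)$, ending with $(m',m'')$, where each $(i,j)$ is followed only by $(i+1,j)$, $(i,j+1)$ or $(i+1,j+1)$. For a matrix $D'\in\mathbb{R}^{m'\times m''}$, $\mathrm{DTW}(D')=\min_T\sum_{(i,j)\in T}D'[i,j]$ over all traversals $T$ (computable in $O(m'm'')$ time by dynamic programming). For a traversal $T$ let $s^{(T)}_1\ge s^{(T)}_2\ge\dots$ be the values $\|v_i-w_j\|$, $(i,j)\in T$, sorted non-increasingly, padded with zeros beyond $|T|$; $d_{k\text{-}DTW}(\sigma,\tau)=\min_T\sum_{l=1}^k s^{(T)}_l$. Running time counts each vertex-to-vertex distance computation and each arithmetic operation as unit cost. *)

From HB Require Import structures.
From mathcomp Require Import all_boot all_order all_algebra.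
From mathcomp Require Import reals.
Set Implicit Arguments. Unset Strict Implicit. Unset Printing Implicit Defensive.
Import Order.TTheory GRing.Theory Num.Theory.
Local Open Scope ring_scope.

Section KDTW.
Variables (R : realType) (d : nat).
Implicit Types (sigma tau : seq 'rV[R]_d).

Definition vnorm (v : 'rV[R]_d) : R := Num.sqrt (\sum_(i < d) v 0 i ^+ 2).

(* 0-based vertex distance ||v_i - w_j|| *)
Definition vdist sigma tau (i j : nat) : R :=
  vnorm (nth 0 sigma i - nth 0 tau j).

Definition tstep (p q : nat * nat) : bool :=
  [|| q == (p.1.+1, p.2), q == (p.1, p.2.+1) | q == (p.1.+1, p.2.+1)].

Definition traversal (m1 m2 : nat) (T : seq (nat * nat)) : bool :=
  if T is p :: T' then
    [&& p == (0%N, 0%N), path tstep p T' & last p T' == (m1.-1, m2.-1)]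
  else false.

(* sum of the k largest distances along T (padded with zeros) *)
Definition kcost sigma tau (k : nat) (T : seq (nat * nat)) : R :=
  let s := sort (fun x y : R => y <= x) [seq vdist sigma tau p.1 p.2 | p <- T] in
  \sum_(l < k) nth 0 s l.

Definition is_kDTW sigma tau (k : nat) (x : R) : Prop :=
  (exists2 T, traversal (size sigma) (size tau) T & x = kcost sigma tau k T) /\
  (forall T, traversal (size sigma) (size tau) T -> x <= kcost sigma tau k T).

Definition num_distinct sigma tau : nat :=
  size (undup [seq vdist sigma tau i j | i <- iota 0 (size sigma),
                                         j <- iota 0 (size tau)]).

(* ---------- The algorithm, instrumented with a unit-cost operation counter.
   Every function returns (result, number of unit operations). ---------- *)

(* collect distinct values; membership test in U costs size U comparisons *)
Definition distinct_c (L : seq R) : seq R * nat :=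
  foldl (fun acc x =>
           let: (U, c) := acc in
           ((if x \in U then U else x :: U), (c + size U)%N)) ([::], 0%N) L.

Fixpoint ins_c (x : R) (s : seq R) : seq R * nat :=
  match s with
  | [::] => ([:: x], 0%N)
  | y :: s' => if y < x then (x :: y :: s', 1%N)
               else let: (t, c) := ins_c x s' in (y :: t, c.+1)
  end.

Definition isort_c (s : seq R) : seq R * nat :=
  foldr (fun x acc => let: (t, c) := ins_c x acc.1 in (t, (acc.2 + c)%N))
        ([::], 0%N) s.

Fixpoint first_row_aux (a : nat -> R) (j n : nat) (prev : R) : seq R * nat :=
  match n with
  | 0 => ([::], 0%N)
  | n'.+1 => let c := prev + a j in
             let: (r, k) := first_row_aux a j.+1 n' c in (c :: r, k.+1)
  end.

Definition first_row (a : nat -> R) (m2 : nat) : seq R * nat :=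
  match m2 with
  | 0 => ([::], 0%N)
  | m.+1 => let c0 := a 0%N in
            let: (r, k) := first_row_aux a 1 m c0 in (c0 :: r, k)
  end.

(* c_j = a j + min(prev_j, prev_{j-1}, c_{j-1}) : 3 operations *)
Fixpoint next_aux (a : nat -> R) (j : nat) (ps : seq R) (pdiag cleft : R)
  : seq R * nat :=
  match ps with
  | [::] => ([::], 0%N)
  | p :: ps' => let c := a j + Num.min p (Num.min pdiag cleft) in
                let: (r, k) := next_aux a j.+1 ps' p c in (c :: r, (k + 3)%N)
  end.

Definition next_row (a : nat -> R) (prev : seq R) : seq R * nat :=
  match prev with
  | [::] => ([::], 0%N)
  | p0 :: ps => let c0 := p0 + a 0%N in
                let: (r, k) := next_aux a 1 ps p0 c0 in (c0 :: r, k.+1)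
  end.

Fixpoint rows_from (A : nat -> nat -> R) (i n : nat) (prev : seq R)
  : seq R * nat :=
  match n with
  | 0 => (prev, 0%N)
  | n'.+1 => let: (r, k) := next_row (A i) prev in
             let: (r', k') := rows_from A i.+1 n' r in (r', (k + k')%N)
  end.

Definition dtw_dp (A : nat -> nat -> R) (m1 m2 : nat) : R * nat :=
  let: (r0, k0) := first_row (A 0%N) m2 in
  let: (r, k) := rows_from A 1 m1.-1 r0 in (last 0 r, (k0 + k)%N).

(* The algorithm of the statement.  mincost = None encodes +infinity. *)
Definition kdtw_alg sigma tau (k : nat) : option R * nat :=
  let m1 := size sigma in
  let m2 := size tau in
  let D := vdist sigma tau in
  let cD := (m1 * m2)%N in                         (* distance computations *)
  let L := [seq D i j | i <- iota 0 m1, j <- iota 0 m2] in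
  let: (U, cU) := distinct_c L in
  let: (Srt, cS) := isort_c U in
  let E := Srt ++ [:: 0] in                          (* E[1] > ... > E[z] , 0 *)
  let: (res, cL) :=
     foldl (fun acc e =>
              let Dp := fun i j => Num.max (D i j - e) 0 in  (* 2 ops/cell *)
              let: (t, ct) := dtw_dp Dp m1 m2 in
              let cand := t + k%:R * e in                    (* 2 ops *)
              (Some (if acc.1 is Some x then Num.min x cand else cand),
               (acc.2 + 2 * (m1 * m2) + ct + 3)%N))        (* +1 for min *)
           (None, 0%N) E in
  (res, (cD + cU + cS + cL)%N).

End KDTW.

From HB Require Import structures.
From mathcomp Require Import all_boot all_order all_algebra.
From mathcomp Require Import reals zify lra.
Set Implicit Arguments. Unset Strict Implicit. Unset Printing Implicit Defensive.
Import Order.TTheory GRing.Theory Num.Theory.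
Local Open Scope ring_scope.

(* Let s be the distances along a traversal T, sorted non-increasingly. For
   every threshold t >= 0 the sum of the k largest entries of s is at most
   k t + sum_x max (x - t, 0), with equality when t is the k-th largest entry
   (0 if s is shorter). The right-hand side is k t plus the DTW cost of T for
   the matrix D' = max (D - t, 0), so d_{k-DTW} is the minimum over t of
   k t + DTW(D'), and t may range over the distinct entries of D together with 0.
   Each DTW(D') is the dynamic programme over the rows of D', using a constant
   number of operations per cell, which gives the O(m' m'' z) operation count. *)

Section Minimum.
Variable R : realDomainType.

Definition is_min_of (T : Type) (pT : predType T) (A : pT) (f : T -> R) (x : R) : Prop :=
  (exists2 t, t \in A & x = f t) /\ (forall t, t \in A -> x <= f t).

Lemma is_min_of_seq1 (T : eqType) (f : T -> R) a : is_min_of [:: a] f (f a).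
Proof.
split; first by exists a; rewrite ?mem_seq1.
by move=> t; rewrite mem_seq1 => /eqP ->.
Qed.

Lemma is_min_of_cons (T : eqType) (f : T -> R) a s x :
  is_min_of s f x -> is_min_of (a :: s) f (Num.min (f a) x).
Proof.
move=> [[t ts ->] xmin]; split.
  by case: leP => _; [exists a; rewrite ?mem_head | exists t; rewrite // inE ts orbT].
move=> u; rewrite inE => /predU1P [->|us]; first by rewrite ge_min lexx.
by rewrite ge_min xmin ?orbT.
Qed.

Lemma is_min_of_rcons (T : eqType) (f : T -> R) s a x :
  is_min_of s f x -> is_min_of (rcons s a) f (Num.min x (f a)).
Proof.
move=> /(is_min_of_cons a); rewrite minC => -[[t ta ->] xmin].
by split; [exists t; rewrite // mem_rcons | move=> u; rewrite mem_rcons; apply: xmin].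
Qed.

Lemma is_min_of_addr (T : Type) (pT : predType T) (A : pT) (f : T -> R) x c :
  is_min_of A f x -> is_min_of A (fun t => f t + c) (x + c).
Proof.
move=> [[t tA ->] xmin].
by split=> [|u uA]; [exists t | rewrite lerD2r xmin].
Qed.

Lemma is_min_of_exchange (T I : Type) (pT : predType T) (pI : predType I) (A : pT) (B : pI)
    (f : T -> R) (g : I -> T -> R) (c : I -> R) x :
  (forall e, e \in B -> is_min_of A (g e) (c e)) ->
  (forall t e, t \in A -> e \in B -> f t <= g e t) ->
  (forall t, t \in A -> exists2 e, e \in B & g e t <= f t) ->
  is_min_of B c x -> is_min_of A f x.
Proof.
move=> gmin f_le_g g_le_f [[e0 e0B ->] xmin].
have lower t : t \in A -> c e0 <= f t.
  move=> tA; have [e eB gef] := g_le_f t tA.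
  have [_ cmin] := gmin e eB.
  exact: le_trans (xmin e eB) (le_trans (cmin t tA) gef).
have [[t0 t0A c0E] _] := gmin e0 e0B.
split=> //; exists t0 => //.
by apply: le_anti; rewrite lower // c0E f_le_g.
Qed.

End Minimum.

Section PairFold.
Variables (S A : Type) (F : A * nat -> S -> A * nat).

Lemma foldl_fst (g : A -> S -> A) :
  (forall acc e, (F acc e).1 = g acc.1 e) ->
  forall acc s, (foldl F acc s).1 = foldl g acc.1 s.
Proof. by move=> Fg acc s; elim: s acc => //= e s IHs acc; rewrite IHs Fg. Qed.

Lemma foldl_snd_addn (n : nat) :
  (forall acc e, (F acc e).2 = (acc.2 + n)%N) ->
  forall acc s, (foldl F acc s).2 = (acc.2 + size s * n)%N.
Proof. by move=> Fn acc s; elim: s acc => [|e s IHs] acc /=; rewrite ?IHs ?Fn; lia. Qed.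

End PairFold.

Section RunningMin.
Variables (R : realDomainType) (T : eqType) (c : T -> R).

Definition min_step (o : option R) (e : T) : option R :=
  Some (if o is Some x then Num.min x (c e) else c e).

Lemma foldl_min_step s : s != [::] ->
  exists2 x, foldl min_step None s = Some x & is_min_of s c x.
Proof.
elim/last_ind: s => // s a IHs _; rewrite foldl_rcons.
have [->|/IHs [x -> xmin]] := eqVneq s [::]; first by exists (c a); last exact: is_min_of_seq1.
by exists (Num.min x (c a)); last exact: is_min_of_rcons.
Qed.

End RunningMin.

Local Notation traversal_to q := (traversal q.1.+1 q.2.+1).

Section Traversals.

Definition tpreds (q : nat * nat) : seq (nat * nat) :=
  match q with
  | (0, 0) => [::]
  | (0, j.+1) => [:: (0, j)]
  | (i.+1, 0) => [:: (i, 0)]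
  | (i.+1, j.+1) => [:: (i, j.+1); (i, j); (i.+1, j)]
  end%N.

Lemma tstepE q0 q : tstep q0 q = (q0 \in tpreds q).
Proof.
case: q0 q => [i0 j0] [[|i] [|j]]; rewrite /tstep /= ?inE !xpair_eqE /=;
  by apply/idP/idP; lia.
Qed.

Lemma traversal_rcons q0 q T :
  traversal_to q0 T -> tstep q0 q -> traversal_to q (rcons T q).
Proof.
case: T => [|p T] //=; case: q0 q => [i0 j0] [i j] /=.
move=> /and3P [p0 Tpath /eqP Tlast] step.
by rewrite p0 rcons_path Tpath last_rcons Tlast step eqxx.
Qed.

Lemma traversal_inv q T : traversal_to q T ->
  T = [:: (0%N, 0%N)] \/
  exists2 q0, tstep q0 q & exists2 T0, traversal_to q0 T0 & T = rcons T0 q.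
Proof.
case: T => [|p T] //=; case: q => [i j] /and3P [/eqP -> + /eqP].
case/lastP: T => [|T q] /=; first by left.
rewrite rcons_path last_rcons => /andP [Tpath step] <-; right.
exists (last (0%N, 0%N) T) => //; exists ((0%N, 0%N) :: T) => //=.
by rewrite Tpath -surjective_pairing eqxx.
Qed.

Lemma traversal_le q T p : traversal_to q T -> p \in T -> (p.1 <= q.1)%N && (p.2 <= q.2)%N.
Proof.
elim/last_ind: T q => [|T a IHT] q // /traversal_inv [-> | [q0 step [T0 T0q]]].
  by rewrite mem_seq1 => /eqP ->.
case/rcons_inj=> TE aE; subst T0 q; rewrite mem_rcons inE => /predU1P [->|/(IHT _ T0q)].
  by rewrite !leqnn.
by case: q0 a step {IHT T0q} => [i0 j0] [i j]; rewrite /tstep => /or3P [] /eqP [-> ->] /=; lia.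
Qed.

End Traversals.

Definition dtw_dp_count (m1 m2 : nat) : nat := (m2.-1 + m1.-1 * (m2.-1 * 3).+1)%N.

Lemma dtw_dp_count_le m1 m2 :
  (0 < m1)%N -> (0 < m2)%N -> (dtw_dp_count m1 m2 <= 3 * (m1 * m2))%N.
Proof. by case: m1 m2 => [|m1] [|m2] // _ _; rewrite /dtw_dp_count /=; nia. Qed.

Section DynamicProgramming.
Variables (R : realType) (A : nat -> nat -> R).

Definition cost (T : seq (nat * nat)) : R := \sum_(p <- T) A p.1 p.2.

Lemma cost_rcons T q : cost (rcons T q) = cost T + A q.1 q.2.
Proof. by rewrite /cost -cats1 big_cat big_seq1. Qed.

Lemma is_min_of_cost00 : is_min_of (traversal 1 1) cost (A 0 0).
Proof.
split; first by exists [:: (0%N, 0%N)]; rewrite // /cost big_seq1.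
move=> T /traversal_inv [-> | [q0]]; first by rewrite /cost big_seq1.
by rewrite tstepE.
Qed.

Lemma is_min_of_cost_step q (m : nat * nat -> R) v :
  (forall q0, q0 \in tpreds q -> is_min_of (traversal_to q0) cost (m q0)) ->
  is_min_of (tpreds q) m v -> is_min_of (traversal_to q) cost (v + A q.1 q.2).
Proof.
move=> mmin [[q0 q0q ->] vmin]; split.
  have [[T0 T0q ->] _] := mmin q0 q0q.
  exists (rcons T0 q); last by rewrite cost_rcons.
  by apply: traversal_rcons T0q _; rewrite tstepE.
move=> T Tq; have [TE | [q1 q1q [T1 T1q ->]]] := traversal_inv Tq.
  by move: Tq q0q; rewrite TE; case: q {mmin vmin} => i j /= /and3P [_ _ /eqP [<- <-]].
rewrite tstepE in q1q; rewrite cost_rcons lerD2r.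
by apply: le_trans (vmin q1 q1q) _; apply: (mmin q1 q1q).2.
Qed.

Fixpoint dtw_table (i : nat) : nat -> R :=
  match i with
  | 0 => fix row j := if j is j'.+1 then row j' + A 0 j else A 0 0
  | i'.+1 => let prev := dtw_table i' in
      fix row j := if j is j'.+1
                   then A i j + Num.min (prev j) (Num.min (prev j') (row j'))
                   else prev 0%N + A i 0%N
  end.

Lemma dtw_table0S j : dtw_table 0 j.+1 = dtw_table 0 j + A 0 j.+1.
Proof. by []. Qed.

Lemma dtw_tableS0 i : dtw_table i.+1 0 = dtw_table i 0 + A i.+1 0.
Proof. by []. Qed.

Lemma dtw_tableSS i j : dtw_table i.+1 j.+1 =
  A i.+1 j.+1 + Num.min (dtw_table i j.+1) (Num.min (dtw_table i j) (dtw_table i.+1 j)).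
Proof. by []. Qed.

Arguments dtw_table : simpl never.

Lemma dtw_table_min i j : is_min_of (traversal i.+1 j.+1) cost (dtw_table i j).
Proof.
pose m q := dtw_table q.1 q.2.
elim: i j => [|i IHi]; elim=> [|j IHj].
- exact: is_min_of_cost00.
- rewrite dtw_table0S; apply: (@is_min_of_cost_step (0%N, j.+1) m).
    by move=> q0; rewrite mem_seq1 => /eqP ->.
  exact: is_min_of_seq1.
- rewrite dtw_tableS0; apply: (@is_min_of_cost_step (i.+1, 0%N) m).
    by move=> q0; rewrite mem_seq1 => /eqP ->.
  exact: is_min_of_seq1.
- rewrite dtw_tableSS addrC; apply: (@is_min_of_cost_step (i.+1, j.+1) m).
    by move=> q0; rewrite !inE => /or3P [] /eqP ->.
  by do 2 apply: is_min_of_cons; apply: is_min_of_seq1.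
Qed.

Definition dtw_row i n := [seq dtw_table i j | j <- iota 0 n].

Lemma last_dtw_row i n : last 0 (dtw_row i n.+1) = dtw_table i n.
Proof. by rewrite /dtw_row -addn1 iotaD map_cat last_cat. Qed.

Lemma first_row_auxE j n :
  first_row_aux (A 0) j.+1 n (dtw_table 0 j) = ([seq dtw_table 0 j' | j' <- iota j.+1 n], n).
Proof. by elim: n j => [|n IHn] j //=; rewrite -dtw_table0S IHn. Qed.

Lemma first_rowE n : first_row (A 0) n.+1 = (dtw_row 0 n.+1, n).
Proof. by rewrite /dtw_row /= -[A 0 0]/(dtw_table 0 0) first_row_auxE. Qed.

Lemma next_auxE i j n :
  next_aux (A i.+1) j.+1 [seq dtw_table i j' | j' <- iota j.+1 n]
    (dtw_table i j) (dtw_table i.+1 j) =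
  ([seq dtw_table i.+1 j' | j' <- iota j.+1 n], (n * 3)%N).
Proof.
by elim: n j => [|n IHn] j //=; rewrite -dtw_tableSS IHn mulSnr.
Qed.

Lemma next_rowE i n :
  next_row (A i.+1) (dtw_row i n.+1) = (dtw_row i.+1 n.+1, (n * 3).+1).
Proof. by rewrite /dtw_row /= -dtw_tableS0 next_auxE. Qed.

Lemma rows_fromE i n m :
  rows_from A i.+1 n (dtw_row i m.+1) = (dtw_row (i + n) m.+1, (n * (m * 3).+1)%N).
Proof.
elim: n i => [|n IHn] i; first by rewrite /= addn0.
by cbn -[next_row dtw_row]; rewrite next_rowE IHn addnS mulSn.
Qed.

Lemma dtw_dpE m1 m2 : (0 < m1)%N -> (0 < m2)%N ->
  dtw_dp A m1 m2 = (dtw_table m1.-1 m2.-1, dtw_dp_count m1 m2).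
Proof.
case: m1 m2 => [|m1] [|m2] // _ _.
by rewrite /dtw_dp first_rowE rows_fromE last_dtw_row.
Qed.

End DynamicProgramming.

Section DistinctSort.
Variable R : realType.
Implicit Types (s : seq R) (x : R).

Lemma distinct_c_rcons s x : distinct_c (rcons s x) =
  let: (U, c) := distinct_c s in ((if x \in U then U else x :: U), (c + size U)%N).
Proof. by rewrite /distinct_c foldl_rcons. Qed.

Lemma distinct_cE s : (distinct_c s).1 = undup (rev s).
Proof.
elim/last_ind: s => // s x IHs; rewrite distinct_c_rcons rev_rcons /=.
by case: distinct_c IHs => U c /= ->; rewrite mem_undup.
Qed.

Lemma size_undup_rev (T : eqType) (s : seq T) : size (undup (rev s)) = size (undup s).
Proof. exact/perm_size/perm_undup/mem_rev. Qed.

Lemma distinct_c_count s : ((distinct_c s).2 <= size s * size (undup s))%N.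
Proof.
elim/last_ind: s => // s x IHs; rewrite distinct_c_rcons.
have := distinct_cE s; case: distinct_c IHs => U c /= IHc UE.
have sizeU : size U = size (undup s) by rewrite UE size_undup_rev.
have grow : (size (undup s) <= size (undup (rcons s x)))%N.
  by apply: uniq_leq_size (undup_uniq s) _ => y; rewrite !mem_undup mem_rcons inE orbC => ->.
by rewrite size_rcons sizeU mulSn addnC leq_add // (leq_trans IHc) // leq_mul2l grow orbT.
Qed.

Lemma ins_c_perm x s : perm_eq (ins_c x s).1 (x :: s).
Proof.
elim: s => //= y s IHs; case: ifP => _ //=.
case: ins_c IHs => t c /= IHs.
apply: (@perm_trans _ (y :: x :: s)); first by rewrite perm_cons.
by rewrite (perm_catCA [:: y] [:: x] s).
Qed.

Lemma ins_c_count x s : ((ins_c x s).2 <= size s)%N.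
Proof. by elim: s => //= y s; case: ifP => _ //; case: ins_c. Qed.

Lemma isort_c_cons x s : isort_c (x :: s) =
  let: (t, c) := ins_c x (isort_c s).1 in (t, ((isort_c s).2 + c)%N).
Proof. by []. Qed.

Lemma isort_c_perm s : perm_eq (isort_c s).1 s.
Proof.
elim: s => // x s IHs; rewrite isort_c_cons.
have := ins_c_perm x (isort_c s).1; case: ins_c => t c /= tperm.
by apply: perm_trans tperm _; rewrite perm_cons.
Qed.

Lemma size_isort_c s : size (isort_c s).1 = size s.
Proof. exact: perm_size (isort_c_perm s). Qed.

Lemma isort_c_count s : ((isort_c s).2 <= size s * size s)%N.
Proof.
elim: s => // x s IHs; rewrite isort_c_cons.
have := ins_c_count x (isort_c s).1; case: ins_c => t c /=.
rewrite size_isort_c; nia.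
Qed.

End DistinctSort.

Lemma mem_nth_or_default (T : eqType) (x0 : T) s i : nth x0 s i \in x0 :: s.
Proof.
by case: (ltnP i (size s)) => [/(mem_nth x0) | /(nth_default x0) ->];
  rewrite inE ?eqxx // => ->; rewrite orbT.
Qed.

Section TopK.
Variable R : realDomainType.
Implicit Types (s : seq R) (t x : R).

Lemma sum_topk_le s k t : 0 <= t ->
  \sum_(l < k) s`_l <= k%:R * t + \sum_(x <- s) Num.max (x - t) 0.
Proof.
move=> t_ge0; elim: s k => [|x s IHs] [|k].
- by rewrite big_ord0 mul0r big_nil addr0.
- by rewrite big_nil addr0 big1 ?mulr_ge0 // => l _; rewrite nth_nil.
- by rewrite big_ord0 mul0r add0r sumr_ge0 // => y _; rewrite le_max lexx orbT.
rewrite big_ord_recl big_cons /= -natr1 mulrDl mul1r.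
have x_le : x <= t + Num.max (x - t) 0 by rewrite -lerBlDl le_max lexx.
have := IHs k; lra.
Qed.

Lemma sum_topk_eq s k : sorted >=%R s -> {in s, forall x, 0 <= x} ->
  \sum_(l < k) s`_l = k%:R * s`_k.-1 + \sum_(x <- s) Num.max (x - s`_k.-1) 0.
Proof.
elim: s k => [|x s IHs] k s_sorted s_ge0.
  by rewrite nth_nil mulr0 big_nil addr0 big1 // => l _; rewrite nth_nil.
have s_le_x : {in s, forall y, y <= x} by apply/allP/(order_path_min ge_trans).
have above_x0 : \sum_(y <- s) Num.max (y - x) 0 = 0.
  by rewrite big_seq big1 // => y /s_le_x y_le; rewrite max_r // subr_le0.
case: k => [|[|k]] /=.
- by rewrite big_ord0 mul0r add0r big_cons subrr maxxx above_x0 addr0.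
- by rewrite big_ord1 mul1r big_cons subrr maxxx above_x0 !addr0.
have t_le_x : s`_k <= x.
  have := mem_nth_or_default 0 s k; rewrite inE => /predU1P [-> | /s_le_x //].
  by apply: s_ge0; rewrite mem_head.
have tail_ge0 : {in s, forall y, 0 <= y} by move=> y ys; apply: s_ge0; rewrite inE ys orbT.
rewrite big_ord_recl /= (IHs _ (path_sorted s_sorted) tail_ge0).
rewrite big_cons max_l ?subr_ge0 // -[k.+2%:R]natr1 mulrDl mul1r; lra.
Qed.

End TopK.

Section KDTW.
Variables (R : realType) (d : nat) (sigma tau : seq 'rV[R]_d) (k : nat).

Local Notation m1 := (size sigma).
Local Notation m2 := (size tau).

Definition dists (T : seq (nat * nat)) : seq R := [seq vdist sigma tau p.1 p.2 | p <- T].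

Definition dist_above (e : R) (i j : nat) : R := Num.max (vdist sigma tau i j - e) 0.

Definition kdtw_candidate (e : R) : R :=
  dtw_table (dist_above e) m1.-1 m2.-1 + k%:R * e.

Lemma vdist_ge0 i j : 0 <= vdist sigma tau i j.
Proof. exact: sqrtr_ge0. Qed.

Lemma cost_dist_above e T :
  cost (dist_above e) T = \sum_(x <- sort >=%R (dists T)) Num.max (x - e) 0.
Proof. by rewrite (perm_big _ (permEl (perm_sort _ _))) big_map. Qed.

Lemma kcost_le e T : 0 <= e -> kcost sigma tau k T <= cost (dist_above e) T + k%:R * e.
Proof. by rewrite cost_dist_above addrC; apply: sum_topk_le. Qed.

Lemma kcost_eq T : exists2 e, e \in 0 :: dists T &
  kcost sigma tau k T = cost (dist_above e) T + k%:R * e.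
Proof.
have mem_sorted := perm_mem (permEl (perm_sort >=%R (dists T))).
exists (sort >=%R (dists T))`_k.-1.
  by have := mem_nth_or_default 0 (sort >=%R (dists T)) k.-1; rewrite !inE mem_sorted.
rewrite cost_dist_above addrC; apply: sum_topk_eq.
  by apply: sort_sorted => x y; apply: le_total.
by move=> x; rewrite mem_sorted => /mapP [p _ ->]; apply: vdist_ge0.
Qed.

Lemma is_kDTW_of_min_candidate (E : seq R) x :
  (0 < m1)%N -> (0 < m2)%N ->
  {in E, forall e, 0 <= e} -> 0 \in E ->
  (forall i j, (i < m1)%N -> (j < m2)%N -> vdist sigma tau i j \in E) ->
  is_min_of E kdtw_candidate x -> is_kDTW sigma tau k x.
Proof.
move=> m1_gt0 m2_gt0 E_ge0 E0 E_dists xmin.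
suff : is_min_of (traversal m1 m2) (kcost sigma tau k) x by [].
apply: (is_min_of_exchange (g := fun e T => cost (dist_above e) T + k%:R * e) _ _ _ xmin).
- move=> e _; apply: is_min_of_addr; rewrite -{1}(prednK m1_gt0) -{1}(prednK m2_gt0).
  exact: dtw_table_min.
- by move=> T e _ /E_ge0; apply: kcost_le.
move=> T Tm; have [e eT ->] := kcost_eq T; exists e => //.
move: eT; rewrite inE => /predU1P [-> // | /mapP [[i j] ijT ->]].
have /andP [/= i_le j_le] := traversal_le (q := (m1.-1, m2.-1)) (T := T) Tm ijT.
by apply: E_dists; lia.
Qed.

Definition all_dists : seq R :=
  [seq vdist sigma tau i j | i <- iota 0 m1, j <- iota 0 m2].

Lemma mem_all_dists i j : (i < m1)%N -> (j < m2)%N -> vdist sigma tau i j \in all_dists.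
Proof. by move=> ? ?; apply: allpairs_f; rewrite mem_iota. Qed.

Lemma size_all_dists : size all_dists = (m1 * m2)%N.
Proof. by rewrite size_allpairs !size_iota. Qed.

Lemma size_undup_all_dists_gt0 : (0 < m1)%N -> (0 < m2)%N -> (0 < size (undup all_dists))%N.
Proof.
move=> m1_gt0 m2_gt0; have := mem_all_dists m1_gt0 m2_gt0.
by rewrite -mem_undup; case: undup.
Qed.

Lemma is_kDTW_of_min_threshold (E : seq R) x :
  (0 < m1)%N -> (0 < m2)%N -> E =i all_dists ->
  is_min_of (E ++ [:: 0]) kdtw_candidate x -> is_kDTW sigma tau k x.
Proof.
move=> m1_gt0 m2_gt0 E_dists; apply: is_kDTW_of_min_candidate => //.
- move=> e; rewrite mem_cat E_dists mem_seq1 => /orP [/allpairsP [[i j] [_ _ ->]] | /eqP ->] //.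
  exact: vdist_ge0.
- by rewrite mem_cat mem_seq1 eqxx orbT.
- by move=> i j ? ?; rewrite mem_cat E_dists mem_all_dists.
Qed.

End KDTW.

Lemma kdtw_op_count_arith (P z N cU cE : nat) :
  (0 < z <= P)%N -> (N <= 3 * P)%N -> (cU <= P * z)%N -> (cE <= z * z)%N ->
  (P + cU + cE + z.+1 * (2 * P + N + 3) <= 20 * (P * z))%N.
Proof. nia. Qed.

Theorem theorem3p2 :
  exists C : nat,
  forall (R : realType) (d : nat) (sigma tau : seq 'rV[R]_d) (k : nat),
    (0 < size sigma)%N -> (0 < size tau)%N ->
    (exists2 x : R, (kdtw_alg sigma tau k).1 = Some x & is_kDTW sigma tau k x) /\
    ((kdtw_alg sigma tau k).2 <=
       C * (size sigma * size tau * num_distinct sigma tau))%N.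
Proof.
exists 20%N => R d sigma tau k m1_gt0 m2_gt0.
rewrite /kdtw_alg /num_distinct -/(all_dists sigma tau); set L := all_dists sigma tau.
have := distinct_cE L; have := distinct_c_count L.
case: distinct_c => U cU /= cU_le ->.
have := isort_c_perm (undup (rev L)); have := isort_c_count (undup (rev L)).
case: isort_c => E cE /= cE_le E_perm.
have E_L : E =i L by move=> e; rewrite (perm_mem E_perm) mem_undup mem_rev.
case fold_E: foldl => [res cL] /=; split.
  have [|x x_E xmin] := foldl_min_step (kdtw_candidate sigma tau k) (s := E ++ [:: 0]).
    by case: E {E_perm E_L fold_E}.
  exists x; last exact: is_kDTW_of_min_threshold xmin.
  rewrite -x_E -[res]/((res, cL).1) -fold_E.
  by apply: foldl_fst => acc e; rewrite dtw_dpE.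
have -> : cL = (size (E ++ [:: 0%R]) *
    (2 * (size sigma * size tau) + dtw_dp_count (size sigma) (size tau) + 3))%N.
  rewrite -[cL]/((res, cL).2) -fold_E.
  by apply: foldl_snd_addn => acc e; rewrite dtw_dpE //= !addnA.
rewrite size_cat addn1 size_all_dists (perm_size E_perm) size_undup_rev in cU_le cE_le *.
apply: kdtw_op_count_arith => //; last exact: dtw_dp_count_le.
by rewrite size_undup_all_dists_gt0 // -size_all_dists size_undup.
Qed.
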